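(* For every $n$, $\mu_n>0$, $\theta\in\mathbb R$ and $x\in\mathbb R$, $$F_{A,n,\theta}(x)=\mathbf 1(n^{1/2}\theta+x\ge0)\,\Phi\big(z^{(2)}_{n,\theta}(x)\big)+\mathbf 1(n^{1/2}\theta+x<0)\,\Phi\big(z^{(1)}_{n,\theta}(x)\big).$$ Consequently the distribution of $n^{1/2}(\hat\theta_A-\theta)$ is the sum of an atom of mass $\Phi(n^{1/2}(-\theta+\mu_n))-\Phi(n^{1/2}(-\theta-\mu_n))$ at the point $-n^{1/2}\theta$ and an absolutely continuous part with Lebesgue density $$\tfrac12\Big\{\mathbf 1(n^{1/2}\theta+x>0)\,\phi\big(z^{(2)}_{n,\theta}(x)\big)(1+t_{n,\theta}(x))+\mathbf 1(n^{1/2}\theta+x<0)\,\phi\big(z^{(1)}_{n,\theta}(x)\big)(1-t_{n,\theta}(x))\Big\},$$ where $t_{n,\theta}(x)=\tfrac12(n^{1/2}\theta+x)\big/\big(((n^{1/2}\theta+x)/2)^2+n\mu_n^2\big)^{1/2}$.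
   Context: Gaussian location model: for each sample size $n$, $y_1,\dots,y_n$ are i.i.d. $N(\theta,1)$ with $\theta\in\mathbb R$ unknown; $\bar y$ is their mean. $P_{n,\theta}$ denotes the probability governing a sample of size $n$ when $\theta$ is the true parameter. Given a nonrandom tuning parameter $\mu_n>0$, the adaptive LASSO estimator is $\hat\theta_A=0$ if $|\bar y|\le\mu_n$ and $\hat\theta_A=\bar y-\mu_n^2/\bar y$ if $|\bar y|>\mu_n$. $F_{A,n,\theta}(x)=P_{n,\theta}(n^{1/2}(\hat\theta_A-\theta)\le x)$. $\Phi,\phi$ are the standard normal cdf and density. For $x\in\mathbb R$, $$z^{(1)}_{n,\theta}(x)=-\frac{n^{1/2}\theta-x}{2}-\sqrt{\Big(\frac{n^{1/2}\theta+x}{2}\Big)^2+n\mu_n^2},\qquad z^{(2)}_{n,\theta}(x)=-\frac{n^{1/2}\theta-x}{2}+\sqrt{\Big(\frac{n^{1/2}\theta+x}{2}\Big)^2+n\mu_n^2}.$$ *)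

From Stdlib Require Import Reals Lra ClassicalEpsilon.
Open Scope R_scope.

Definition phi (u : R) : R := exp (- (u ^ 2) / 2) / sqrt (2 * PI).

Definition ImproperIntegralR (f : R -> R) (v : R) : Prop :=
  forall eps : R, 0 < eps -> exists M : R, forall a b : R, a <= - M -> M <= b ->
    exists pr : Riemann_integrable f a b, Rabs (RiemannInt pr - v) < eps.

Definition ImproperIntegralTo (f : R -> R) (x v : R) : Prop :=
  forall eps : R, 0 < eps -> exists M : R, forall a : R, a <= - M ->
    exists pr : Riemann_integrable f a x, Rabs (RiemannInt pr - v) < eps.

(* The value of the improper integrals (chosen by classical description;
   it is the integral whenever the integral exists). *)
Definition IntR (f : R -> R) : R :=
  epsilon (inhabits 0) (fun v => ImproperIntegralR f v).
Definition IntTo (f : R -> R) (x : R) : R :=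
  epsilon (inhabits 0) (fun v => ImproperIntegralTo f x v).

Definition Phi (z : R) : R := IntTo phi z.

(* Adaptive LASSO estimator as a function of the sample mean ybar. *)
Definition thetaA (mu ybar : R) : R :=
  if Rle_dec (Rabs ybar) mu then 0 else ybar - mu ^ 2 / ybar.

(* Density of the sample mean of n i.i.d. N(theta,1) observations: N(theta,1/n). *)
Definition ybar_density (n : nat) (theta y : R) : R :=
  sqrt (INR n) * phi (sqrt (INR n) * (y - theta)).

(* F_{A,n,theta}(x) = P_{n,theta}( n^{1/2} (thetaA - theta) <= x ). *)
Definition F_A (n : nat) (mu theta x : R) : R :=
  IntR (fun y => (if Rle_dec (sqrt (INR n) * (thetaA mu y - theta)) x then 1 else 0)
                 * ybar_density n theta y).

Definition z1 (n : nat) (mu theta x : R) : R :=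
  - (sqrt (INR n) * theta - x) / 2
  - sqrt (((sqrt (INR n) * theta + x) / 2) ^ 2 + INR n * mu ^ 2).

Definition z2 (n : nat) (mu theta x : R) : R :=
  - (sqrt (INR n) * theta - x) / 2
  + sqrt (((sqrt (INR n) * theta + x) / 2) ^ 2 + INR n * mu ^ 2).

Definition t_nt (n : nat) (mu theta x : R) : R :=
  ((sqrt (INR n) * theta + x) / 2)
  / sqrt (((sqrt (INR n) * theta + x) / 2) ^ 2 + INR n * mu ^ 2).


Definition ac_density (n : nat) (mu theta x : R) : R :=
  / 2 * ( (if Rlt_dec 0 (sqrt (INR n) * theta + x) then 1 else 0)
            * phi (z2 n mu theta x) * (1 + t_nt n mu theta x)
        + (if Rlt_dec (sqrt (INR n) * theta + x) 0 then 1 else 0)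
            * phi (z1 n mu theta x) * (1 - t_nt n mu theta x)).

Definition atom_mass (n : nat) (mu theta : R) : R :=
  Phi (sqrt (INR n) * (- theta + mu)) - Phi (sqrt (INR n) * (- theta - mu)).

From Stdlib Require Import Reals Lra Lia Classical ClassicalEpsilon FunctionalExtensionality.
From Coquelicot Require Import Coquelicot.
Open Scope R_scope.
Set Bullet Behavior "Strict Subproofs".

(** Rescale by [k = sqrt n]: with [u = k ybar], [m = k mu] and [s = k theta + x], the event
    [k (thetaA mu ybar - theta) <= x] reads [thetaA m u <= s], since [thetaA] commutes with
    scaling.  The map [u |-> thetaA m u] is nondecreasing (0 on [[-m, m]], [u - m^2/u]
    outside), and on [|u| > m] one has [u (u - m^2/u - s) = u^2 - s u - m^2], so the event
    is [u <= U] with [U] the root of [u^2 - s u - m^2] having the sign of [s].  As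
    [u - k theta] is standard normal, [F] is [Phi (U - k theta)], i.e. [Phi z2] or
    [Phi z1].  For the decomposition, [z1' = (1 - t)/2] and [z2' = (1 + t)/2], so the
    density integrates by substitution to [Phi z1] left of [c = -k theta] and to
    increments of [Phi z2] right of it; the jump at [c] is
    [Phi (z2 c) - Phi (z1 c) = Phi (k (mu - theta)) - Phi (k (-mu - theta))].
    Since [Phi] is itself defined as an improper integral, we first show that [phi] has a
    finite left tail, using [phi x <= exp (x + 1/2)]. *)

Lemma ImproperIntegralTo_unique f x v w :
  ImproperIntegralTo f x v -> ImproperIntegralTo f x w -> v = w.
Proof.
  intros Hv Hw. apply cond_eq. intros eps Heps.
  destruct (Hv (eps / 2)) as [M1 H1]; [lra|].
  destruct (Hw (eps / 2)) as [M2 H2]; [lra|].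
  pose proof (Rle_abs M1); pose proof (Rle_abs M2).
  pose proof (Rabs_pos M1); pose proof (Rabs_pos M2).
  destruct (H1 (- (Rabs M1 + Rabs M2))) as [p1 Hp1]; [lra|].
  destruct (H2 (- (Rabs M1 + Rabs M2))) as [p2 Hp2]; [lra|].
  rewrite (RiemannInt_P5 p1 p2) in Hp1.
  replace (v - w) with ((RiemannInt p2 - w) - (RiemannInt p2 - v)) by ring.
  eapply Rle_lt_trans; [apply Rabs_triang|]. rewrite Rabs_Ropp. lra.
Qed.

Lemma ImproperIntegralR_unique f v w :
  ImproperIntegralR f v -> ImproperIntegralR f w -> v = w.
Proof.
  intros Hv Hw. apply cond_eq. intros eps Heps.
  destruct (Hv (eps / 2)) as [M1 H1]; [lra|].
  destruct (Hw (eps / 2)) as [M2 H2]; [lra|].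
  pose proof (Rle_abs M1); pose proof (Rle_abs M2).
  pose proof (Rabs_pos M1); pose proof (Rabs_pos M2).
  set (M := Rabs M1 + Rabs M2).
  destruct (H1 (- M) M) as [p1 Hp1]; unfold M; [lra|lra|].
  destruct (H2 (- M) M) as [p2 Hp2]; unfold M; [lra|lra|].
  rewrite (RiemannInt_P5 p1 p2) in Hp1.
  replace (v - w) with ((RiemannInt p2 - w) - (RiemannInt p2 - v)) by ring.
  eapply Rle_lt_trans; [apply Rabs_triang|]. rewrite Rabs_Ropp. lra.
Qed.

Lemma IntTo_eq f x v : ImproperIntegralTo f x v -> IntTo f x = v.
Proof.
  intros Hv. apply (ImproperIntegralTo_unique f x); [|exact Hv].
  unfold IntTo. apply epsilon_spec. exists v. exact Hv.
Qed.

Lemma IntR_eq f v : ImproperIntegralR f v -> IntR f = v.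
Proof.
  intros Hv. apply (ImproperIntegralR_unique f); [|exact Hv].
  unfold IntR. apply epsilon_spec. exists v. exact Hv.
Qed.

Lemma ImproperIntegralTo_of_is_RInt f x v :
  (forall eps, 0 < eps -> exists M, forall a, a <= - M ->
     exists l, is_RInt f a x l /\ Rabs (l - v) < eps) ->
  ImproperIntegralTo f x v.
Proof.
  intros H eps Heps. destruct (H eps Heps) as [M HM]. exists M. intros a Ha.
  destruct (HM a Ha) as [l [Hl Hlv]].
  exists (ex_RInt_Reals_0 _ _ _ (ex_intro _ l Hl)).
  rewrite <- RInt_Reals, (is_RInt_unique _ _ _ _ Hl). exact Hlv.
Qed.

Lemma ImproperIntegralR_of_is_RInt f v :
  (forall eps, 0 < eps -> exists M, forall a b, a <= - M -> M <= b ->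
     exists l, is_RInt f a b l /\ Rabs (l - v) < eps) ->
  ImproperIntegralR f v.
Proof.
  intros H eps Heps. destruct (H eps Heps) as [M HM]. exists M. intros a b Ha Hb.
  destruct (HM a b Ha Hb) as [l [Hl Hlv]].
  exists (ex_RInt_Reals_0 _ _ _ (ex_intro _ l Hl)).
  rewrite <- RInt_Reals, (is_RInt_unique _ _ _ _ Hl). exact Hlv.
Qed.

Section Gluing.
Variables (f g h : R -> R) (c : R).
Hypothesis f_left : forall y, y < c -> f y = g y.
Hypothesis f_right : forall y, c < y -> f y = h y.

Lemma is_RInt_glue_left a b l : a <= b <= c -> is_RInt g a b l -> is_RInt f a b l.
Proof.
  intros Hab. apply is_RInt_ext. intros y Hy.
  rewrite Rmin_left in Hy by lra. rewrite Rmax_right in Hy by lra.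
  symmetry. apply f_left. lra.
Qed.

Lemma is_RInt_glue a b l1 l2 : a <= c <= b ->
  is_RInt g a c l1 -> is_RInt h c b l2 -> is_RInt f a b (l1 + l2).
Proof.
  intros Hab Hg Hh. apply (is_RInt_Chasles f a c b l1 l2).
  - apply (is_RInt_glue_left a c); [lra|exact Hg].
  - apply (is_RInt_ext h); [|exact Hh]. intros y Hy.
    rewrite Rmin_left in Hy by lra. rewrite Rmax_right in Hy by lra.
    symmetry. apply f_right. lra.
Qed.
End Gluing.

Lemma phi_continuous x : continuous phi x.
Proof.
  apply (@ex_derive_continuous R_AbsRing R_NormedModule).
  unfold phi. auto_derive. pose proof PI_RGT_0. lra.
Qed.

Lemma ex_RInt_phi a b : ex_RInt phi a b.
Proof.
  apply (@ex_RInt_continuous R_CompleteNormedModule). intros; apply phi_continuous.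
Qed.

Lemma phi_ge0 x : 0 <= phi x.
Proof.
  unfold phi. apply Rle_mult_inv_pos; [left; apply exp_pos|].
  apply sqrt_lt_R0. pose proof PI_RGT_0. lra.
Qed.

(* [-x^2/2 <= x + 1/2] since [(x+1)^2 >= 0], and [sqrt (2 PI) >= 1]. *)
Lemma phi_le_exp x : phi x <= exp (x + / 2).
Proof.
  unfold phi.
  assert (Hs : 1 <= sqrt (2 * PI)).
  { rewrite <- sqrt_1. apply sqrt_le_1_alt. pose proof PI2_1. lra. }
  assert (Hexp : exp (- x ^ 2 / 2) <= exp (x + / 2)).
  { assert (Hle : - x ^ 2 / 2 <= x + / 2) by (pose proof (pow2_ge_0 (x + 1)); nra).
    destruct (Rle_lt_or_eq_dec _ _ Hle) as [Hlt|Heq]; [left; apply exp_increasing, Hlt|rewrite Heq; lra]. }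
  apply Rle_trans with (exp (- x ^ 2 / 2)); [|exact Hexp].
  assert (Hinv : / sqrt (2 * PI) <= 1) by (rewrite <- Rinv_1; apply Rinv_le_contravar; lra).
  pose proof (exp_pos (- x ^ 2 / 2)). unfold Rdiv at 1. clear Hexp. nra.
Qed.

Lemma RInt_phi_le a : a <= 0 -> 0 <= RInt phi a 0 <= exp (/ 2).
Proof.
  intros Ha. split.
  - apply RInt_ge_0; [exact Ha|apply ex_RInt_phi|intros; apply phi_ge0].
  - assert (Hexp : is_RInt (fun u => exp (u + / 2)) a 0 (exp (0 + / 2) - exp (a + / 2))).
    { apply (@is_RInt_derive R_CompleteNormedModule (fun u => exp (u + / 2))).
      - intros u _. auto_derive; [exact I|ring].
      - intros u _. apply (@ex_derive_continuous R_AbsRing R_NormedModule).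
        auto_derive. exact I. }
    apply Rle_trans with (RInt (fun u => exp (u + / 2)) a 0).
    + apply RInt_le; [exact Ha|apply ex_RInt_phi|eexists; exact Hexp|].
      intros; apply phi_le_exp.
    + rewrite (is_RInt_unique _ _ _ _ Hexp), Rplus_0_l.
      pose proof (exp_pos (a + / 2)). lra.
Qed.

Definition phi_left_integrals (v : R) : Prop := exists a, a <= 0 /\ v = RInt phi a 0.

Lemma phi_left_integrals_bound : bound phi_left_integrals.
Proof. exists (exp (/ 2)). intros v [a [Ha ->]]. apply RInt_phi_le, Ha. Qed.

Lemma phi_left_integrals_inhabited : exists v, phi_left_integrals v.
Proof. exists (RInt phi 0 0), 0. split; [lra|reflexivity]. Qed.

(* This is [Phi 0]: [RInt phi a 0] increases as [a] decreases, and is bounded. *)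
Definition phi_left_mass : R :=
  proj1_sig (completeness _ phi_left_integrals_bound phi_left_integrals_inhabited).

Lemma RInt_phi_left_cvg eps : 0 < eps -> exists a0, forall a, a <= a0 ->
  phi_left_mass - eps < RInt phi a 0 <= phi_left_mass.
Proof.
  intros Heps.
  assert (Hlub : is_lub phi_left_integrals phi_left_mass)
    by (unfold phi_left_mass; destruct completeness; assumption).
  destruct Hlub as [Hub Hleast].
  destruct (classic (exists a0, a0 <= 0 /\ phi_left_mass - eps < RInt phi a0 0))
    as [[a0 [Ha0 Hlt]]|Hnone].
  - exists a0. intros a Ha. split.
    + rewrite <- (RInt_Chasles phi a a0 0) by apply ex_RInt_phi.
      assert (0 <= RInt phi a a0)
        by (apply RInt_ge_0; [exact Ha|apply ex_RInt_phi|intros; apply phi_ge0]).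
      simpl. unfold plus; simpl. lra.
    + apply Hub. exists a. split; [lra|reflexivity].
  - exfalso. enough (phi_left_mass <= phi_left_mass - eps) by lra.
    apply Hleast. intros v [a [Ha ->]]. apply Rnot_lt_le. intros Hlt.
    apply Hnone. exists a. split; assumption.
Qed.

Lemma Phi_eq_left_mass z : Phi z = phi_left_mass + RInt phi 0 z.
Proof.
  apply IntTo_eq, ImproperIntegralTo_of_is_RInt. intros eps Heps.
  destruct (RInt_phi_left_cvg eps Heps) as [a0 Ha0].
  exists (Rabs a0). intros a Ha. exists (RInt phi a z). split.
  - apply (@RInt_correct R_CompleteNormedModule), ex_RInt_phi.
  - pose proof (Rle_abs (- a0)). rewrite Rabs_Ropp in *.
    specialize (Ha0 a ltac:(lra)).
    rewrite <- (RInt_Chasles phi a 0 z) by apply ex_RInt_phi. simpl. unfold plus; simpl.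
    rewrite Rabs_left1; lra.
Qed.

Lemma RInt_phi a b : RInt phi a b = Phi b - Phi a.
Proof.
  rewrite !Phi_eq_left_mass, <- (RInt_Chasles phi a 0 b) by apply ex_RInt_phi.
  rewrite <- (opp_RInt_swap phi 0 a) by apply ex_RInt_phi.
  simpl. unfold plus, opp; simpl. ring.
Qed.

Lemma Phi_left_tail eps : 0 < eps -> exists T, forall p, p <= T -> Rabs (Phi p) < eps.
Proof.
  intros Heps. destruct (RInt_phi_left_cvg eps Heps) as [T HT]. exists T. intros p Hp.
  specialize (HT p Hp). rewrite Phi_eq_left_mass.
  rewrite <- (opp_RInt_swap phi p 0) by apply ex_RInt_phi. simpl. unfold opp; simpl.
  apply Rabs_def1; lra.
Qed.

Lemma is_RInt_phi_comp (z dz : R -> R) a b :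
  (forall y, is_derive z y (dz y)) -> (forall y, continuous dz y) ->
  is_RInt (fun y => dz y * phi (z y)) a b (Phi (z b) - Phi (z a)).
Proof.
  intros Hz Hdz. rewrite <- RInt_phi.
  apply (@is_RInt_comp R_CompleteNormedModule phi z dz).
  - intros; apply phi_continuous.
  - intros y _. split; [apply Hz|apply Hdz].
Qed.

(* The root of [u^2 - s u - m^2 = 0] with the sign of [s] (the positive one when [s = 0]). *)
Definition thetaA_threshold (m s : R) : R :=
  if Rle_dec 0 s then s / 2 + sqrt ((s / 2) ^ 2 + m ^ 2)
  else s / 2 - sqrt ((s / 2) ^ 2 + m ^ 2).

Lemma thetaA_le_iff m s u : 0 < m -> thetaA m u <= s <-> u <= thetaA_threshold m s.
Proof.
  intros Hm. unfold thetaA, thetaA_threshold.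
  set (r := sqrt ((s / 2) ^ 2 + m ^ 2)).
  assert (Hr0 : 0 <= r) by apply sqrt_pos.
  assert (Hr2 : r ^ 2 = (s / 2) ^ 2 + m ^ 2)
    by (apply pow2_sqrt; pose proof (pow2_ge_0 (s / 2)); pose proof (pow2_ge_0 m); lra).
  assert (Hrm : m <= r) by nra.
  assert (Hrs : Rabs (s / 2) < r).
  { apply Rabs_def1; nra. }
  apply Rabs_def2 in Hrs.
  destruct (Rle_dec (Rabs u) m) as [Hu|Hu].
  - apply Rabs_le_between in Hu.
    destruct (Rle_dec 0 s); split; intros; lra.
  - apply Rnot_le_lt in Hu.
    assert (Hfac : u * (u - m ^ 2 / u - s) = (u - s / 2 - r) * (u - s / 2 + r)).
    { field_simplify; [nra|]. intros ->. rewrite Rabs_R0 in Hu. lra. }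
    destruct (Rle_or_lt 0 u) as [Hu0|Hu0].
    + rewrite Rabs_right in Hu by lra.
      destruct (Rle_dec 0 s); split; intros; nra.
    + rewrite Rabs_left in Hu by lra.
      destruct (Rle_dec 0 s); split; intros; nra.
Qed.

Lemma thetaA_scale k m y : 0 < k -> k * thetaA m y = thetaA (k * m) (k * y).
Proof.
  intros Hk. unfold thetaA. rewrite Rabs_mult, (Rabs_right k) by lra.
  destruct (Rle_dec (Rabs y) m) as [Hy|Hy];
    destruct (Rle_dec (k * Rabs y) (k * m)) as [Hky|Hky].
  - ring.
  - exfalso. apply Hky, Rmult_le_compat_l; lra.
  - exfalso. apply Hy, (Rmult_le_reg_l k); assumption.
  - destruct (Req_dec y 0) as [->|Hy0].
    + rewrite Rmult_0_r. unfold Rdiv. rewrite Rinv_0. ring.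
    + field. lra.
Qed.

Lemma thetaA_threshold_shift n mu theta x :
  thetaA_threshold (sqrt (INR n) * mu) (sqrt (INR n) * theta + x) - sqrt (INR n) * theta =
  if Rle_dec 0 (sqrt (INR n) * theta + x) then z2 n mu theta x else z1 n mu theta x.
Proof.
  assert (Hk2 : sqrt (INR n) ^ 2 = INR n) by (apply pow2_sqrt, pos_INR).
  unfold thetaA_threshold, z1, z2. rewrite Rpow_mult_distr, Hk2.
  destruct (Rle_dec 0 (sqrt (INR n) * theta + x)); field.
Qed.

Lemma sqrt_INR_pos n : (1 <= n)%nat -> 0 < sqrt (INR n).
Proof. intros Hn. apply sqrt_lt_R0, lt_0_INR. lia. Qed.

Lemma is_RInt_ybar_density n theta a b :
  is_RInt (ybar_density n theta) a b
    (Phi (sqrt (INR n) * (b - theta)) - Phi (sqrt (INR n) * (a - theta))).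
Proof.
  apply (is_RInt_phi_comp (fun y => sqrt (INR n) * (y - theta)) (fun _ => sqrt (INR n))).
  - intros y. auto_derive; [exact I|ring].
  - intros y. apply continuous_const.
Qed.

Lemma ybar_le_probability n theta Y : (1 <= n)%nat ->
  ImproperIntegralR (fun y => (if Rle_dec y Y then 1 else 0) * ybar_density n theta y)
    (Phi (sqrt (INR n) * (Y - theta))).
Proof.
  intros Hn. pose proof (sqrt_INR_pos n Hn) as Hk. set (k := sqrt (INR n)) in *.
  apply ImproperIntegralR_of_is_RInt. intros eps Heps.
  destruct (Phi_left_tail eps Heps) as [T HT].
  assert (HTk : 0 <= Rabs T / k) by (apply Rle_mult_inv_pos; [apply Rabs_pos|exact Hk]).
  exists (Rabs Y + Rabs theta + Rabs T / k). intros a b Ha Hb.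
  pose proof (Rle_abs Y); pose proof (Rle_abs (- Y)); pose proof (Rle_abs (- theta)).
  pose proof (Rle_abs (- T)); pose proof (Rabs_pos theta). rewrite !Rabs_Ropp in *.
  exists ((Phi (k * (Y - theta)) - Phi (k * (a - theta))) + 0). split.
  - apply (is_RInt_glue _ (ybar_density n theta) (fun _ => 0) Y).
    + intros y Hy. destruct (Rle_dec y Y); [ring|lra].
    + intros y Hy. destruct (Rle_dec y Y); [lra|ring].
    + lra.
    + apply is_RInt_ybar_density.
    + pose proof (@is_RInt_const R_NormedModule Y b 0) as Hzero.
      rewrite (@scal_zero_r R_AbsRing R_NormedModule) in Hzero. exact Hzero.
  - assert (Hka : k * (a - theta) <= T).
    { assert (k * (a - theta) <= k * (- (Rabs T / k))) by (apply Rmult_le_compat_l; lra).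
      replace (k * (- (Rabs T / k))) with (- Rabs T) in * by (field; lra). lra. }
    replace (_ - _) with (- Phi (k * (a - theta))) by ring.
    rewrite Rabs_Ropp. apply HT, Hka.
Qed.

Lemma F_A_eq n mu theta x : (1 <= n)%nat -> 0 < mu ->
  F_A n mu theta x = Phi (if Rle_dec 0 (sqrt (INR n) * theta + x)
                          then z2 n mu theta x else z1 n mu theta x).
Proof.
  intros Hn Hmu. rewrite <- thetaA_threshold_shift.
  pose proof (sqrt_INR_pos n Hn) as Hk. set (k := sqrt (INR n)) in *.
  set (U := thetaA_threshold (k * mu) (k * theta + x)).
  assert (Hevent : forall y, k * (thetaA mu y - theta) <= x <-> y <= U / k).
  { intros y. transitivity (thetaA (k * mu) (k * y) <= k * theta + x).
    - rewrite <- thetaA_scale by exact Hk. split; intros; lra.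
    - rewrite thetaA_le_iff by (apply Rmult_lt_0_compat; assumption).
      rewrite <- Rle_div_r, Rmult_comm by exact Hk. reflexivity. }
  unfold F_A. fold k.
  rewrite (functional_extensionality _
             (fun y => (if Rle_dec y (U / k) then 1 else 0) * ybar_density n theta y)).
  - rewrite (IntR_eq _ _ (ybar_le_probability n theta (U / k) Hn)). fold k.
    f_equal. field. lra.
  - intros y. specialize (Hevent y).
    destruct (Rle_dec (k * (thetaA mu y - theta)) x), (Rle_dec y (U / k)); tauto.
Qed.

Section AbsolutelyContinuousPart.
Variables (n : nat) (mu theta : R).
Hypothesis n_pos : (1 <= n)%nat.
Hypothesis mu_pos : 0 < mu.

Let z_radicand y := ((sqrt (INR n) * theta + y) / 2) ^ 2 + INR n * mu ^ 2.

Lemma z_radicand_pos y : 0 < z_radicand y.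
Proof.
  unfold z_radicand. pose proof (pow2_ge_0 ((sqrt (INR n) * theta + y) / 2)).
  assert (0 < INR n) by (apply lt_0_INR; lia).
  assert (0 < mu ^ 2) by (apply pow_lt, mu_pos). nra.
Qed.

(* [auto_derive] expands the powers inside [sqrt]; this folds them back. *)
Lemma z_radicand_expanded y :
  (sqrt (INR n) * theta + y) * / 2 * ((sqrt (INR n) * theta + y) * / 2 * 1)
  + INR n * (mu * (mu * 1)) = z_radicand y.
Proof. unfold z_radicand. unfold Rdiv. ring. Qed.

Lemma is_derive_z_root x :
  is_derive (fun y => sqrt (z_radicand y)) x (t_nt n mu theta x / 2).
Proof.
  unfold z_radicand. auto_derive.
  - rewrite z_radicand_expanded. apply z_radicand_pos.
  - rewrite z_radicand_expanded. unfold t_nt. fold (z_radicand x).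
    pose proof (sqrt_lt_R0 _ (z_radicand_pos x)). field. lra.
Qed.

Lemma continuous_z1_slope x : continuous (fun y => (1 - t_nt n mu theta y) / 2) x.
Proof.
  apply (@ex_derive_continuous R_AbsRing R_NormedModule).
  unfold t_nt. auto_derive. rewrite z_radicand_expanded.
  pose proof (sqrt_lt_R0 _ (z_radicand_pos x)). repeat split; [apply z_radicand_pos|lra].
Qed.

Lemma continuous_z2_slope x : continuous (fun y => (1 + t_nt n mu theta y) / 2) x.
Proof.
  apply (@ex_derive_continuous R_AbsRing R_NormedModule).
  unfold t_nt. auto_derive. rewrite z_radicand_expanded.
  pose proof (sqrt_lt_R0 _ (z_radicand_pos x)). repeat split; [apply z_radicand_pos|lra].
Qed.

Lemma is_derive_z1 x : is_derive (z1 n mu theta) x ((1 - t_nt n mu theta x) / 2).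
Proof.
  replace ((1 - t_nt n mu theta x) / 2) with (/ 2 - t_nt n mu theta x / 2) by field.
  apply (@is_derive_minus R_AbsRing R_NormedModule
           (fun y => - (sqrt (INR n) * theta - y) / 2) (fun y => sqrt (z_radicand y))).
  - auto_derive; [exact I|field].
  - apply is_derive_z_root.
Qed.

Lemma is_derive_z2 x : is_derive (z2 n mu theta) x ((1 + t_nt n mu theta x) / 2).
Proof.
  replace ((1 + t_nt n mu theta x) / 2) with (/ 2 + t_nt n mu theta x / 2) by field.
  apply (@is_derive_plus R_AbsRing R_NormedModule
           (fun y => - (sqrt (INR n) * theta - y) / 2) (fun y => sqrt (z_radicand y))).
  - auto_derive; [exact I|field].
  - apply is_derive_z_root.
Qed.

Lemma ac_density_left y : y < - (sqrt (INR n) * theta) ->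
  ac_density n mu theta y = (1 - t_nt n mu theta y) / 2 * phi (z1 n mu theta y).
Proof.
  intros Hy. unfold ac_density.
  destruct (Rlt_dec 0 (sqrt (INR n) * theta + y)); [lra|].
  destruct (Rlt_dec (sqrt (INR n) * theta + y) 0); [field|lra].
Qed.

Lemma ac_density_right y : - (sqrt (INR n) * theta) < y ->
  ac_density n mu theta y = (1 + t_nt n mu theta y) / 2 * phi (z2 n mu theta y).
Proof.
  intros Hy. unfold ac_density.
  destruct (Rlt_dec 0 (sqrt (INR n) * theta + y)); [|lra].
  destruct (Rlt_dec (sqrt (INR n) * theta + y) 0); [lra|field].
Qed.

Lemma z_root_at_atom : sqrt (z_radicand (- (sqrt (INR n) * theta))) = sqrt (INR n) * mu.
Proof.
  transitivity (sqrt ((sqrt (INR n) * mu) ^ 2)).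
  - unfold z_radicand. f_equal. rewrite Rpow_mult_distr, pow2_sqrt by apply pos_INR. field.
  - apply sqrt_pow2. pose proof (sqrt_pos (INR n)). nra.
Qed.

Lemma z1_at_atom : z1 n mu theta (- (sqrt (INR n) * theta)) = sqrt (INR n) * (- theta - mu).
Proof. unfold z1. fold (z_radicand (- (sqrt (INR n) * theta))). rewrite z_root_at_atom. field. Qed.

Lemma z2_at_atom : z2 n mu theta (- (sqrt (INR n) * theta)) = sqrt (INR n) * (- theta + mu).
Proof. unfold z2. fold (z_radicand (- (sqrt (INR n) * theta))). rewrite z_root_at_atom. field. Qed.

Lemma z1_le y : z1 n mu theta y <= (y - sqrt (INR n) * theta) / 2.
Proof. unfold z1. pose proof (sqrt_pos (z_radicand y)). unfold z_radicand in *. lra. Qed.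

Lemma IntTo_ac_density x : IntTo (ac_density n mu theta) x =
  if Rle_dec 0 (sqrt (INR n) * theta + x)
  then Phi (z2 n mu theta x) - atom_mass n mu theta else Phi (z1 n mu theta x).
Proof.
  set (c := - (sqrt (INR n) * theta)).
  pose proof (fun a b => is_RInt_phi_comp _ _ a b is_derive_z1 continuous_z1_slope) as Hz1.
  pose proof (fun a b => is_RInt_phi_comp _ _ a b is_derive_z2 continuous_z2_slope) as Hz2.
  apply IntTo_eq, ImproperIntegralTo_of_is_RInt. intros eps Heps.
  destruct (Phi_left_tail eps Heps) as [T HT].
  exists (Rabs x + 2 * Rabs T + Rabs c). intros a Ha.
  pose proof (Rle_abs (- x)); pose proof (Rle_abs (- T)); pose proof (Rle_abs c);
    pose proof (Rle_abs (- c)); rewrite !Rabs_Ropp in *.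
  pose proof (Rabs_pos x); pose proof (Rabs_pos T); pose proof (Rabs_pos c).
  assert (HTa : Rabs (Phi (z1 n mu theta a)) < eps)
    by (apply HT; pose proof (z1_le a); unfold c in *; lra).
  destruct (Rle_dec 0 (sqrt (INR n) * theta + x)).
  - eexists. split.
    + apply (is_RInt_glue _ _ _ c ac_density_left ac_density_right);
        [unfold c in *; lra|apply Hz1|apply Hz2].
    + unfold atom_mass. rewrite <- z1_at_atom, <- z2_at_atom. fold c.
      replace (_ - _) with (- Phi (z1 n mu theta a)) by ring. rewrite Rabs_Ropp. exact HTa.
  - eexists. split.
    + apply (is_RInt_glue_left _ _ c ac_density_left); [unfold c in *; lra|apply Hz1].
    + replace (_ - _) with (- Phi (z1 n mu theta a)) by ring. rewrite Rabs_Ropp. exact HTa.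
Qed.

End AbsolutelyContinuousPart.

Theorem mainTheorem5 (n : nat) (mu theta : R) :
  (1 <= n)%nat -> 0 < mu ->
  (forall x : R,
     F_A n mu theta x =
       (if Rle_dec 0 (sqrt (INR n) * theta + x) then 1 else 0) * Phi (z2 n mu theta x)
     + (if Rlt_dec (sqrt (INR n) * theta + x) 0 then 1 else 0) * Phi (z1 n mu theta x))
  /\
  (forall x : R,
     F_A n mu theta x =
       (if Rle_dec (- (sqrt (INR n) * theta)) x then 1 else 0) * atom_mass n mu theta
     + IntTo (ac_density n mu theta) x).
Proof.
  intros Hn Hmu. split; intros x; rewrite (F_A_eq n mu theta x Hn Hmu).
  - destruct (Rle_dec 0 (sqrt (INR n) * theta + x));
      destruct (Rlt_dec (sqrt (INR n) * theta + x) 0); try lra; ring.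
  - rewrite (IntTo_ac_density n mu theta Hn Hmu x).
    destruct (Rle_dec (- (sqrt (INR n) * theta)) x);
      destruct (Rle_dec 0 (sqrt (INR n) * theta + x)); try lra; ring.
Qed.
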